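(* Let $\mathfrak{A}$ be a commutative Banach algebra, let $\mathfrak{B}$ be a dual Banach algebra, and let $\theta:\mathfrak{A}\to\mathfrak{B}$ be a continuous homomorphism with $w^*$-dense range. If $\mathfrak{A}$ is weakly amenable, then $\mathfrak{B}$ is weakly Connes amenable.
   Context: A dual Banach algebra is a Banach algebra $\mathfrak{B}$ which is the dual of a Banach space $\mathfrak{B}_*$ and whose multiplication is separately $w^*$-continuous. A derivation $D:\mathfrak{C}\to F$ is a continuous linear map with $D(xy)=D(x)\cdot y+x\cdot D(y)$; inner if $D(x)=x\cdot f-f\cdot x$ for some $f\in F$. A Banach algebra $\mathfrak{A}$ is weakly amenable if every derivation $\mathfrak{A}\to\mathfrak{A}^*$ is inner. For a Banach $\mathfrak{B}$-bimodule $E$, $\sigma wc(E)$ is the set of $x\in E$ such that $b\mapsto b\cdot x$, $b\mapsto x\cdot b$ are continuous from $(\mathfrak{B},w^* )$ to $(E,\sigma(E,E^* ))$; $j_{\mathfrak{B}}:\mathfrak{B}^*\to\sigma wc(\mathfrak{B})^*$ is the adjoint of the inclusion $\sigma wc(\mathfrak{B})\hookrightarrow\mathfrak{B}$. $\mathfrak{B}$ is weakly Connes amenable if for every derivation $D:\mathfrak{B}\to\mathfrak{B}^*$ such that $j_{\mathfrak{B}}\circ D:\mathfrak{B}\to\sigma wc(\mathfrak{B})^*$ is $w^*$-$w^*$ continuous, $j_{\mathfrak{B}}\circ D$ is inner. *)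

From mathcomp Require Import all_boot all_algebra.
From mathcomp Require Import all_classical all_reals all_analysis.
From mathcomp Require Export complex.
Import GRing.Theory Num.Theory numFieldNormedType.Exports.
Set Implicit Arguments. Unset Strict Implicit. Unset Printing Implicit Defensive.
Local Open Scope ring_scope.
Local Open Scope classical_set_scope.

Definition is_linear_fun (K : numFieldType) (V : normedModType K) (f : V -> K) : Prop :=
  forall (c : K) (x y : V), f (c *: x + y) = c * f x + f y.

Definition is_clinear (K : numFieldType) (V : normedModType K) (f : V -> K) : Prop :=
  is_linear_fun f /\ continuous f.

Definition weak_open (K : numFieldType) (T : Type) (F : set (T -> K)) (U : set T) : Prop :=
  forall x, U x -> exists (n : nat) (fs : 'I_n -> T -> K) (e : K),
    0 < e /\ (forall i, F (fs i)) /\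
    (forall y, (forall i, `|fs i y - fs i x| < e) -> U y).

Definition weak_cont (K : numFieldType) (T1 T2 : Type)
    (F1 : set (T1 -> K)) (F2 : set (T2 -> K)) (g : T1 -> T2) : Prop :=
  forall U, weak_open F2 U -> weak_open F1 (g @^-1` U).

Definition banach_algebra (K : numFieldType) (A : completeNormedModType K)
    (mul : A -> A -> A) : Prop :=
  associative mul /\
  (forall (c : K) (x y z : A), mul (c *: x + y) z = c *: mul x z + mul y z) /\
  (forall (c : K) (x y z : A), mul z (c *: x + y) = c *: mul z x + mul z y) /\
  (forall x y : A, `|mul x y| <= `|x| * `|y|).

(* Elements of A^* are represented as continuous linear functionals A -> K.
   Bimodule structure of A^*:  (a . f)(z) = f (z a),  (f . a)(z) = f (a z).
   A derivation D : A -> A^* is a bounded (= continuous) linear map with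
   D(xy) = D(x).y + x.D(y). *)
Definition derivation_to_dual (K : numFieldType) (A : completeNormedModType K)
    (mul : A -> A -> A) (D : A -> A -> K) : Prop :=
  (forall a, is_clinear (D a)) /\
  (forall (c : K) (a b z : A), D (c *: a + b) z = c * D a z + D b z) /\
  (exists M : K, forall a z : A, `|D a z| <= M * `|a| * `|z|) /\
  (forall x y z : A, D (mul x y) z = D x (mul y z) + D y (mul z x)).

(* weak amenability: every derivation A -> A^* is inner, D(x) = x.f - f.x *)
Definition weakly_amenable (K : numFieldType) (A : completeNormedModType K)
    (mul : A -> A -> A) : Prop :=
  forall D : A -> A -> K, derivation_to_dual mul D ->
    exists f : A -> K, is_clinear f /\
      forall x z : A, D x z = f (mul z x) - f (mul x z).

(* the weak* topology on B = (P)^* given by the duality iota : B -> P -> K *)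
Definition wstar_family (K : numFieldType) (B P : Type) (iota : B -> P -> K)
  : set (B -> K) := fun g => exists p : P, g = (fun b => iota b p).

(* B is a dual Banach algebra with predual P: B is a Banach algebra, and
   iota : B -> P^* is an isometric linear bijection onto the continuous dual
   P^* of the Banach space P; multiplication is separately w*-continuous. *)
Definition dual_banach_algebra (K : numFieldType) (B : completeNormedModType K)
    (mul : B -> B -> B) (P : completeNormedModType K) (iota : B -> P -> K) : Prop :=
  banach_algebra mul /\
  (forall b, is_clinear (iota b)) /\
  (forall (c : K) (a b : B) (p : P), iota (c *: a + b) p = c * iota a p + iota b p) /\
  (forall phi : P -> K, is_clinear phi -> exists b, iota b = phi) /\
  (forall b : B, (forall p, `|iota b p| <= `|b| * `|p|) /\
     (forall e : K, 0 < e -> exists p, `|p| <= 1 /\ `|b| - e < `|iota b p|)) /\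
  (forall a : B, weak_cont (wstar_family iota) (wstar_family iota) (mul a) /\
                 weak_cont (wstar_family iota) (wstar_family iota) (mul^~ a)).

Definition weak_family (K : numFieldType) (B : normedModType K) : set (B -> K) :=
  fun g => is_clinear g.

Definition sigma_wc (K : numFieldType) (B : completeNormedModType K)
    (mul : B -> B -> B) (P : Type) (iota : B -> P -> K) : set B :=
  fun x => weak_cont (wstar_family iota) (@weak_family K B) (mul^~ x) /\
           weak_cont (wstar_family iota) (@weak_family K B) (mul x).

(* Elements of sigma wc(B)^* are represented by functions g : B -> K, only
   their values on S = sigma wc(B) matter; j_B(phi) = phi restricted to S.
   The w* topology of sigma wc(B)^* is induced by the evaluations at x in S. *)
Definition eval_family (K : numFieldType) (B : Type) (S : set B)
  : set ((B -> K) -> K) := fun ev => exists x, S x /\ ev = (fun g : B -> K => g x).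

Definition weakly_Connes_amenable (K : numFieldType) (B : completeNormedModType K)
    (mul : B -> B -> B) (P : Type) (iota : B -> P -> K) : Prop :=
  let S := sigma_wc mul iota in
  forall D : B -> B -> K, derivation_to_dual mul D ->
    (* j_B o D is w*-w*-continuous *)
    weak_cont (wstar_family iota) (@eval_family K B S) D ->
    (* j_B o D is inner: j_B(D b) = b.f - f.b for some f in sigma wc(B)^* *)
    exists f : B -> K,
      (forall (c : K) (x y : B), S x -> S y -> f (c *: x + y) = c * f x + f y) /\
      {within S, continuous f} /\
      forall b x : B, S x -> D b x = f (mul x b) - f (mul b x).

From HB Require Import structures.
From mathcomp Require Import all_boot all_order all_algebra.
From mathcomp Require Import all_classical all_reals all_analysis.
From mathcomp Require Import complex ring.
Import Order.TTheory GRing.Theory Num.Theory numFieldNormedType.Exports.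
Local Open Scope ring_scope.
Local Open Scope classical_set_scope.

(* Since theta(A) is commutative and w*-dense, separate w*-continuity of the
   product makes theta(A) central in B.  Fix a derivation D : B -> B^* and x in B.
   By centrality, (a, c) |-> D(theta a)(theta c . x) is a derivation A -> A^*; in
   a commutative weakly amenable algebra every such derivation is inner, hence 0.
   Consequently lam := D(theta _)(x) vanishes on products, so (a, c) |-> lam a * lam c
   is a derivation as well, forcing lam a ^ 2 = 0.  Finally, for x in sigma wc(B),
   b |-> D(b)(x) is w*-continuous and vanishes on theta(A), hence everywhere: j_B o D
   is zero, which is inner. *)

Definition weakly_continuous {K : numFieldType} {T : Type} (F : set (T -> K))
    (h : T -> K) : Prop :=
  forall t r, weak_open F [set y | `|h y - t| < r].

Definition weakly_dense_range {K : numFieldType} {T S : Type} (F : set (T -> K))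
    (th : S -> T) : Prop :=
  forall U, weak_open F U -> (exists t, U t) -> exists s, U (th s).

Section WeakTopology.
Context {K : numFieldType} {T : Type} {F : set (T -> K)}.

Lemma weak_openI {U V : set T} :
  weak_open F U -> weak_open F V -> weak_open F (U `&` V).
Proof.
move=> oU oV x [Ux Vx].
have [n [fs [e [e_gt0 [Ffs inU]]]]] := oU x Ux.
have [m [gs [d [d_gt0 [Fgs inV]]]]] := oV x Vx.
(* [K] is only partially ordered: a radius below both [e] and [d] without [min]. *)
have ed_gt0 : 0 < e * d / (e + d) by rewrite divr_gt0 ?mulr_gt0 ?addr_gt0.
have ed_le_e : e * d / (e + d) <= e.
  by rewrite ler_pdivrMr ?addr_gt0 // mulrDr lerDr ltW // mulr_gt0.
have ed_le_d : e * d / (e + d) <= d.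
  by rewrite ler_pdivrMr ?addr_gt0 // mulrDr mulrC lerDl ltW // mulr_gt0.
exists (n + m)%N, (fun i => match fintype.split i with inl j => fs j | inr k => gs k end),
  (e * d / (e + d)).
split=> //; split=> [i|y near_y]; first by case: (fintype.split i).
split; [apply: inU => j | apply: inV => j].
- by have := near_y (unsplit (inl j)); rewrite unsplitK => /lt_le_trans; apply.
- by have := near_y (unsplit (inr j)); rewrite unsplitK => /lt_le_trans; apply.
Qed.

Lemma weakly_continuous_mem (g : T -> K) : F g -> weakly_continuous F g.
Proof.
move=> Fg t r x /= gx_near; exists 1%N, (fun _ => g), (r - `|g x - t|).
split; first by rewrite subr_gt0.
split=> // y /(_ ord0) gy_near /=.
by apply: le_lt_trans (ler_distD (g x) (g y) t) _; rewrite -ltrBrDr.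
Qed.

Lemma weakly_continuous_cst (c : K) : weakly_continuous F (fun _ => c).
Proof.
move=> t r x /= c_near; exists 0%N, (fun _ _ => 0), 1.
by split=> //; split=> [[]|].
Qed.

Lemma weakly_dense_range_eq {S : Type} {th : S -> T} {h1 h2 : T -> K} :
  weakly_dense_range F th -> weakly_continuous F h1 -> weakly_continuous F h2 ->
  (forall s, h1 (th s) = h2 (th s)) -> h1 =1 h2.
Proof.
move=> dense h1_cont h2_cont eq_th x; apply/eqP/negPn/negP => neq.
pose d := `|h1 x - h2 x|.
have d_gt0 : 0 < d by rewrite normr_gt0 subr_eq0.
have [|s [/= near1 near2]] :=
  dense _ (weak_openI (h1_cont (h1 x) (d / 2)) (h2_cont (h2 x) (d / 2))).
  by exists x; rewrite /= !subrr normr0; split; rewrite divr_gt0.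
have : d < d.
  rewrite {2}(splitr d); apply: le_lt_trans (ler_distD (h2 (th s)) _ _) _.
  by rewrite ltrD // distrC -eq_th.
by rewrite ltxx.
Qed.

Lemma weakly_continuous_comp {T' : Type} {F' : set (T' -> K)} {g : T' -> T}
    {h : T -> K} :
  weak_cont F' F g -> weakly_continuous F h -> weakly_continuous F' (h \o g).
Proof. by move=> g_cont h_cont t r; exact: g_cont _ (h_cont t r). Qed.

End WeakTopology.

Section BoundedLinear.
Context {K : numFieldType} {V W : normedModType K} {f : V -> W}.
Hypothesis f_linear : forall c x y, f (c *: x + y) = c *: f x + f y.

Let fL : {linear V -> W} := HB.pack f (GRing.isLinear.Build _ _ _ _ _ f_linear).

Lemma continuous_linear_le_norm :
  continuous f -> exists2 C, 0 < C & forall x, `|f x| <= C * `|x|.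
Proof.
move=> f_cont; have := @continuous_linear_bounded _ _ _ 0 fL (f_cont 0).
by move/linear_boundedP => /pinfty_ex_gt0 [C C_gt0 f_le]; exists C.
Qed.

Lemma le_norm_linear_continuous (C : K) :
  0 <= C -> (forall x, `|f x| <= C * `|x|) -> continuous f.
Proof.
move=> C_ge0 f_le; apply: (@bounded_linear_continuous _ _ _ fL).
apply/linear_boundedP; near=> r => x; apply: le_trans (f_le x) _.
apply: ler_wpM2r => //; near: r; apply: nbhs_pinfty_ge.
by rewrite ger0_real.
Unshelve. all: by end_near.
Qed.

End BoundedLinear.

Section Derivations.
Context {K : numFieldType} {A : completeNormedModType K} {mul : A -> A -> A}.

Lemma banach_algebra_continuous_mulr :
  banach_algebra mul -> forall x, continuous (mul^~ x).
Proof.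
move=> [_ [mul_linear [_ mul_le]]] x.
apply: (le_norm_linear_continuous (fun c u v => mul_linear c u v x) `|x|) => // u.
by rewrite mulrC.
Qed.

Lemma derivation_to_dual_le_norm {D : A -> A -> K} : derivation_to_dual mul D ->
  exists2 M, 0 <= M & forall a z, `|D a z| <= M * `|a| * `|z|.
Proof.
move=> [_ [_ [[M D_le] _]]]; exists `|M| => // a z.
have [az0|az_neq0] := eqVneq (`|a| * `|z|) 0.
  by move: (D_le a z); rewrite -!mulrA az0 !mulr0.
have az_gt0 : 0 < `|a| * `|z| by rewrite lt_def az_neq0 mulr_ge0.
have M_ge0 : 0 <= M.
  by rewrite -(pmulr_lge0 _ az_gt0) mulrA (le_trans _ (D_le a z)).
by rewrite (ger0_norm M_ge0) D_le.
Qed.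

Lemma derivation_to_dual_continuous {D : A -> A -> K} :
  derivation_to_dual mul D -> forall z, continuous (D^~ z).
Proof.
move=> derD z; have [M M_ge0 D_le] := derivation_to_dual_le_norm derD.
apply: (le_norm_linear_continuous (fun c a b => derD.2.1 c a b z) (M * `|z|)).
  by rewrite mulr_ge0.
by move=> a; rewrite mulrAC.
Qed.

Lemma commutative_weakly_amenable_derivation_eq0 {D : A -> A -> K} :
  commutative mul -> weakly_amenable mul -> derivation_to_dual mul D ->
  forall a z, D a z = 0.
Proof.
move=> mulC wa derD a z; have [f [_ D_inner]] := wa D derD.
by rewrite D_inner mulC subrr.
Qed.

Lemma derivation_to_dual_annihilator_square {lam : A -> K} :
  is_clinear lam -> (forall a b, lam (mul a b) = 0) ->
  derivation_to_dual mul (fun a z => lam a * lam z).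
Proof.
move=> [lam_linear lam_cont] lam_mul0.
have [C C_gt0 lam_le] := continuous_linear_le_norm lam_linear lam_cont.
split; [|split; [|split]].
- move=> a; split=> [c x y|z]; first by rewrite lam_linear mulrDr mulrCA.
  exact: continuous_comp (lam_cont z) (@mulrl_continuous _ _ _).
- by move=> c a b z; rewrite lam_linear mulrDl mulrA.
- exists (C * C) => a z; rewrite normrM -mulrA mulrACA.
  by rewrite ler_pM ?normr_ge0.
- by move=> x y z; rewrite !lam_mul0 mul0r !mulr0 addr0.
Qed.

Lemma commutative_weakly_amenable_annihilator_eq0 {lam : A -> K} :
  commutative mul -> weakly_amenable mul ->
  is_clinear lam -> (forall a b, lam (mul a b) = 0) -> forall a, lam a = 0.
Proof.
move=> mulC wa lam_clin lam_mul0 a.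
have := commutative_weakly_amenable_derivation_eq0 mulC wa
  (derivation_to_dual_annihilator_square lam_clin lam_mul0) a a.
by move/eqP; rewrite mulf_eq0 orbb => /eqP.
Qed.

End Derivations.

Section DualBanachAlgebra.
Context {K : numFieldType} {B P : completeNormedModType K}.
Context {mul : B -> B -> B} {iota : B -> P -> K}.
Hypothesis dualB : dual_banach_algebra mul iota.

Lemma dual_banach_algebra_iota_inj (b b' : B) : iota b =1 iota b' -> b = b'.
Proof.
have [_ [_ [iota_linear [_ [iota_norm _]]]]] := dualB.
move=> eq_iota; apply/eqP; rewrite -subr_eq0 -normr_eq0; apply/negPn/negP => neq0.
have iota_diff0 p : iota (b - b') p = 0.
  by rewrite addrC -scaleN1r iota_linear eq_iota mulN1r addNr.
have [_ /(_ `|b - b'|)] := iota_norm (b - b').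
rewrite lt_def neq0 normr_ge0 => /(_ isT) [p [_]].
by rewrite subrr iota_diff0 normr0 ltxx.
Qed.

Lemma weakly_dense_commuting_range_central {S : Type} {th : S -> B} :
  weakly_dense_range (wstar_family iota) th ->
  (forall s s', mul (th s) (th s') = mul (th s') (th s)) ->
  forall s b, mul (th s) b = mul b (th s).
Proof.
have [_ [_ [_ [_ [_ mul_wcont]]]]] := dualB.
move=> dense th_comm s b; apply: dual_banach_algebra_iota_inj => p.
have iota_p_cont : weakly_continuous (wstar_family iota) (iota^~ p).
  by apply: weakly_continuous_mem; exists p.
apply: (weakly_dense_range_eq dense
  (weakly_continuous_comp (mul_wcont (th s)).1 iota_p_cont)
  (weakly_continuous_comp (mul_wcont (th s)).2 iota_p_cont)).
by move=> s' /=; rewrite th_comm.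
Qed.

End DualBanachAlgebra.

Section CentralRange.
Context {K : numFieldType} {A B : completeNormedModType K}.
Context {mulA : A -> A -> A} {mulB : B -> B -> B} {theta : A -> B}.
Hypotheses (banachB : banach_algebra mulB)
  (theta_linear : forall c x y, theta (c *: x + y) = c *: theta x + theta y)
  (theta_mul : forall x y, theta (mulA x y) = mulB (theta x) (theta y))
  (theta_cont : continuous theta)
  (theta_central : forall a b, mulB (theta a) b = mulB b (theta a)).
Context {D : B -> B -> K}.
Hypothesis derD : derivation_to_dual mulB D.

Lemma derivation_to_dual_pullback (x : B) :
  derivation_to_dual mulA (fun a c => D (theta a) (mulB (theta c) x)).
Proof.
have [assocB [mulB_linear [_ mulB_le]]] := banachB.
have [D_clin [D_linear [_ D_der]]] := derD.
have [M M_ge0 D_le] := derivation_to_dual_le_norm derD.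
have [C C_gt0 theta_le] := continuous_linear_le_norm theta_linear theta_cont.
split; [|split; [|split]].
- move=> a; split=> [k u v|c]; first by rewrite theta_linear mulB_linear (D_clin _).1.
  exact: continuous_comp (theta_cont c) (continuous_comp
    (banach_algebra_continuous_mulr banachB x _) ((D_clin _).2 _)).
- by move=> k a b z; rewrite theta_linear D_linear.
- exists (M * C * C * `|x|) => a c; apply: le_trans (D_le _ _) _.
  have theta_c_x_le : `|mulB (theta c) x| <= C * `|c| * `|x|.
    by apply: le_trans (mulB_le _ _) _; rewrite ler_wpM2r.
  have -> : M * C * C * `|x| * `|a| * `|c| = M * (C * `|a|) * (C * `|c| * `|x|).
    by ring.
  by rewrite ler_pM ?mulr_ge0 // ler_wpM2l.
- move=> a b c /=; rewrite theta_mul D_der !theta_mul; congr (_ + _).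
    by rewrite assocB.
  by rewrite -assocB -theta_central assocB.
Qed.

Lemma central_range_derivation_eq0 :
  commutative mulA -> weakly_amenable mulA -> forall a x, D (theta a) x = 0.
Proof.
move=> mulC wa a x.
have D_range_mul0 c b : D (theta c) (mulB (theta b) x) = 0.
  exact: commutative_weakly_amenable_derivation_eq0 mulC wa (derivation_to_dual_pullback x) c b.
apply: (commutative_weakly_amenable_annihilator_eq0 (lam := fun a => D (theta a) x) mulC wa).
  split=> [k u v|u]; first by rewrite theta_linear derD.2.1.
  exact: continuous_comp (theta_cont u) (derivation_to_dual_continuous derD x _).
by move=> b c; rewrite theta_mul derD.2.2.2 D_range_mul0 -theta_central D_range_mul0 addr0.
Qed.

End CentralRange.

Theorem proposition3p16 (R : realType)
    (A : completeNormedModType R[i]) (mulA : A -> A -> A)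
    (B : completeNormedModType R[i]) (mulB : B -> B -> B)
    (P : completeNormedModType R[i]) (iota : B -> P -> R[i])
    (theta : A -> B) :
  banach_algebra mulA ->
  commutative mulA ->
  dual_banach_algebra mulB iota ->
  (forall (c : R[i]) (x y : A), theta (c *: x + y) = c *: theta x + theta y) ->
  (forall x y : A, theta (mulA x y) = mulB (theta x) (theta y)) ->
  continuous theta ->
  (* w*-dense range: every nonempty w*-open set meets the range of theta *)
  (forall U : set B, weak_open (wstar_family iota) U ->
     (exists b, U b) -> exists a, U (theta a)) ->
  weakly_amenable mulA ->
  weakly_Connes_amenable mulB iota.
Proof.
move=> _ mulC dualB theta_linear theta_mul theta_cont dense wa S D derD D_wcont.
have theta_commute a a' : mulB (theta a) (theta a') = mulB (theta a') (theta a).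
  by rewrite -!theta_mul mulC.
have theta_central := weakly_dense_commuting_range_central dualB dense theta_commute.
have D_range0 := central_range_derivation_eq0 dualB.1 theta_linear theta_mul
  theta_cont theta_central derD mulC wa.
exists (fun _ => 0); split; [by move=> c x y _ _; rewrite mulr0 addr0|split].
  exact/continuous_subspaceT/cst_continuous.
move=> b x Sx; rewrite subrr.
have eval_x_cont : weakly_continuous (eval_family S) (fun g : B -> R[i] => g x).
  by apply: weakly_continuous_mem; exists x.
exact: (weakly_dense_range_eq (h1 := D^~ x) dense
  (weakly_continuous_comp D_wcont eval_x_cont) (weakly_continuous_cst 0) (D_range0^~ x)).
Qed.
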